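(* Let $\Sigma$ be a graded alphabet, $t\in T_\Sigma$, and $A_t=(\Sigma,Q,\nu,\delta)$ the subtree automaton of $t$. Then for every state $r\in Q$, the down language satisfies $L_r(A_t)=\{\mathrm{h}(r)\}$.
   Context: A graded alphabet is a finite set $\Sigma=\bigcup_{k\in\mathbb{N}}\Sigma_k$; $T_\Sigma$ is the set of trees $f(t_1,\ldots,t_k)$ with $f\in\Sigma_k$. A RWTA is $A=(\Sigma,Q,\nu,\delta)$ with $Q$ finite, $\nu:Q\to\mathbb{N}$, $\delta\subseteq\bigcup_k Q\times\Sigma_k\times Q^k$; $\delta(f,q_1,\ldots,q_k)=\{q\mid(q,f,q_1,\ldots,q_k)\in\delta\}$, extended to subsets by union over tuples; $\Delta(f(t_1,\ldots,t_k))=\delta(f,\Delta(t_1),\ldots,\Delta(t_k))$. The down language of a state $q$ is $L_q(A)=\{s\in T_\Sigma\mid q\in\Delta(s)\}$. For $t=f(t_1,\ldots,t_k)$, $\mathrm{SubTree}(t)=\{t\}\cup\bigcup_j\mathrm{SubTree}(t_j)$. The tree $t^\sharp$ is obtained from $t$ by indexing each symbol occurrence with its position in a preorder traversal (indexed symbols are distinct and keep their arity); $\Sigma_{t^\sharp}$ is the set of indexed symbols of $t^\sharp$; $\mathrm{h}$ erases indices. The subtree automaton of $t$ is $A_t=(\Sigma,Q,\nu,\delta)$ with $Q=\mathrm{SubTree}(t^\sharp)$, $\nu\equiv1$, and for $f\in\Sigma_{t^\sharp}$ of arity $k$ and $t_1,\ldots,t_{k+1}\in Q$: $t_{k+1}\in\delta(\mathrm{h}(f),t_1,\ldots,t_k)$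 iff $t_{k+1}=f(t_1,\ldots,t_k)$. *)

From mathcomp Require Import all_boot.
From Stdlib Require List.

Set Implicit Arguments.
Unset Strict Implicit.
Unset Printing Implicit Defensive.

(* Unranked trees over labels of type L; a graded alphabet is a finite type
   [S] with an arity function [ar : S -> nat], and T_Sigma is the set of
   trees [t] with [wf ar t] (every node f has exactly [ar f] children). *)
Inductive tree (L : Type) : Type := Node : L -> seq (tree L) -> tree L.
Arguments Node {L} _ _.

Section Trees.
Variable L : Type.

Fixpoint wf (ar : L -> nat) (t : tree L) : bool :=
  match t with Node f ts => (size ts == ar f) && all (wf ar) ts end.

Fixpoint subtrees (t : tree L) : seq (tree L) :=
  match t with Node f ts => t :: flatten (map subtrees ts) end.

Fixpoint labels (t : tree L) : seq L :=
  match t with Node f ts => f :: flatten (map labels ts) end.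

Fixpoint tmap (L' : Type) (g : L -> L') (t : tree L) : tree L' :=
  match t with Node f ts => Node (g f) (map (tmap g) ts) end.

(* t^sharp: each symbol occurrence is paired with its position (starting at 0)
   in a preorder traversal.  [sharp_from n t] indexes starting from [n] and
   returns the next unused index. *)
Fixpoint sharp_from (n : nat) (t : tree L) : tree (L * nat) * nat :=
  match t with
  | Node f ts =>
      let fix go (m : nat) (us : seq (tree L)) : seq (tree (L * nat)) * nat :=
        match us with
        | [::] => ([::], m)
        | u :: us' =>
            let (u', m1) := sharp_from m u in
            let (us'', m2) := go m1 us' in (u' :: us'', m2)
        end in
      let (ts', m) := go n.+1 ts in (Node (f, n) ts', m)
  end.

Definition sharp (t : tree L) : tree (L * nat) := (sharp_from 0 t).1.

End Trees.

Definition herase (L : Type) (t : tree (L * nat)) : tree L := tmap fst t.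

(* The subtree automaton A_t.  States are the elements of SubTree(t^sharp)
   (indexed trees); nu is constantly 1 (irrelevant for down languages).
   An indexed symbol f' = (f, i) has the arity of f. *)
Section SubtreeAutomaton.
Variables (S : finType) (ar : S -> nat) (t : tree S).

Definition state := tree (S * nat).

Definition is_state (q : state) : Prop := List.In q (subtrees (sharp t)).

Definition delta (f : S) (qs : seq state) (q : state) : Prop :=
  exists f' : S * nat,
    [/\ List.In f' (labels (sharp t)), f'.1 = f, size qs = ar f,
        (forall q', List.In q' qs -> is_state q') & is_state q]
    /\ q = Node f' qs.

Inductive Delta : tree S -> state -> Prop :=
  | DeltaNode (f : S) (ss : seq (tree S)) (qs : seq state) (q : state) :
      List.Forall2 Delta ss qs -> delta f qs q -> Delta (Node f ss) q.

Definition down_lang (q : state) (s : tree S) : Prop := wf ar s /\ Delta s q.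

End SubtreeAutomaton.

(* The states of A_t are the indexed subtrees of t^sharp, and a transition can
   only build the state [Node f' qs] from the states [qs] of its children, with
   f' an indexed copy of the input symbol.  Hence, by induction on s, any run of
   A_t on s reaching r retraces r with its indices erased, so s = h(r).
   Conversely h(r) has a run reaching r, since every node of a subtree of
   t^sharp is a symbol occurrence of t^sharp, its children are again subtrees,
   and its arity is correct because t^sharp is well formed like t. *)
From mathcomp Require Import all_boot.
From Stdlib Require List.

Set Implicit Arguments.
Unset Strict Implicit.

Section Subtrees.
Variable L : Type.

Definition tree_nested_ind (P : tree L -> Prop)
  (IH : forall f ts, (forall u, List.In u ts -> P u) -> P (Node f ts)) :
  forall t, P t :=
  fix F t := match t with
  | Node f ts => IH f ts
      ((fix G (us : seq (tree L)) : forall u, List.In u us -> P u :=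
          match us with
          | [::] => fun u (hu : List.In u [::]) => False_ind _ hu
          | v :: vs => fun u hu =>
              match hu with
              | or_introl e => eq_ind v P (F v) u e
              | or_intror h => G vs u h
              end
          end) ts)
  end.

Lemma In_flatten_map (A B : Type) (g : A -> seq B) x (us : seq A) :
  List.In x (flatten (map g us)) <-> exists2 u, List.In u us & List.In x (g u).
Proof.
elim: us => [|a us IH] /=; first by split => // [[u]].
rewrite List.in_app_iff IH; split.
- by case=> [hx | [u hu hx]]; [exists a; first left | exists u; first right].
- by case=> u [<- | hu] hx; [left | right; exists u].
Qed.

Lemma all_In (A : Type) (p : pred A) (us : seq A) u :
  all p us -> List.In u us -> p u.
Proof. by elim: us => [|a us IH] //= /andP [pa pus] [<- | hu] //; apply: IH. Qed.

Lemma In_subtrees_self (t : tree L) : List.In t (subtrees t).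
Proof. by case: t => f ts; left. Qed.

Lemma In_subtrees_trans (t r q : tree L) :
  List.In r (subtrees t) -> List.In q (subtrees r) -> List.In q (subtrees t).
Proof.
elim/tree_nested_ind: t => f ts IH /= [<- // | /In_flatten_map [u hu hr] hq].
by right; apply/In_flatten_map; exists u => //; apply: IH hr hq.
Qed.

Lemma In_subtrees_child (t : tree L) f qs q :
  List.In (Node f qs) (subtrees t) -> List.In q qs -> List.In q (subtrees t).
Proof.
move=> hr hq; apply: In_subtrees_trans hr _; right.
by apply/In_flatten_map; exists q => //; apply: In_subtrees_self.
Qed.

Lemma In_labels_subtree (t : tree L) f qs :
  List.In (Node f qs) (subtrees t) -> List.In f (labels t).
Proof.
elim/tree_nested_ind: t => g ts IH /= [[-> _] | /In_flatten_map [u hu hr]].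
  by left.
by right; apply/In_flatten_map; exists u => //; apply: IH hr.
Qed.

Lemma wf_subtree (ar : L -> nat) (t r : tree L) :
  List.In r (subtrees t) -> wf ar t -> wf ar r.
Proof.
elim/tree_nested_ind: t => g ts IH /= [<- // | /In_flatten_map [u hu hr]].
by case/andP=> _ wf_ts; apply: (IH u hu hr); exact: (@all_In _ (wf ar) ts u wf_ts hu).
Qed.

End Subtrees.

Lemma wf_tmap_fst (S : Type) (ar : S -> nat) (u : tree (S * nat)) :
  wf (fun p => ar p.1) u = wf ar (tmap fst u).
Proof.
elim/tree_nested_ind: u => f ts IH /=; rewrite size_map all_map; congr (_ && _).
elim: ts IH => [|a ts IHts] IH //=.
by rewrite IH; [congr (_ && _); apply: IHts => v hv; apply: IH; right | left].
Qed.

Section Sharp.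
Variable S : Type.

(* The local [fix go] in the body of [sharp_from], named so that it can be
   reasoned about. *)
Fixpoint sharp_forest_from (n : nat) (us : seq (tree S))
    : seq (tree (S * nat)) * nat :=
  match us with
  | [::] => ([::], n)
  | u :: us' =>
      let (u', m1) := sharp_from n u in
      let (us'', m2) := sharp_forest_from m1 us' in (u' :: us'', m2)
  end.

Lemma sharp_from_Node n f (ts : seq (tree S)) :
  sharp_from n (Node f ts) =
  let (ts', m) := sharp_forest_from n.+1 ts in (Node (f, n) ts', m).
Proof. by []. Qed.

Lemma herase_sharp_from (t : tree S) n : herase (sharp_from n t).1 = t.
Proof.
elim/tree_nested_ind: t n => f ts IH n; rewrite sharp_from_Node.
have herase_forest m : map (@herase S) (sharp_forest_from m ts).1 = ts.
  elim: ts IH m => [|u us IHus] IH m //=.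
  case Eu: (sharp_from m u) => [u' m1]; case Eus: sharp_forest_from => [us' m2].
  have := IH u (or_introl erefl) m; rewrite Eu /= => ->.
  by have := IHus (fun v hv => IH v (or_intror hv)) m1; rewrite Eus /= => ->.
case E: sharp_forest_from => [ts' m] /=.
by have := herase_forest n.+1; rewrite E /= => <-.
Qed.

Lemma herase_sharp (t : tree S) : herase (sharp t) = t.
Proof. exact: herase_sharp_from. Qed.

End Sharp.

Section SubtreeAutomatonRuns.
Variables (S : finType) (ar : S -> nat) (t : tree S).

Lemma wf_sharp : wf ar t -> wf (fun p => ar p.1) (sharp t).
Proof. by rewrite wf_tmap_fst -/(herase _) herase_sharp. Qed.

Lemma Delta_herase s r : Delta ar t s r -> s = herase r.
Proof.
elim/tree_nested_ind: s r => f ss IH r Dr.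
inversion Dr as [f0 ss0 qs q Dss [f' [[_ <- _ _ _] ->]]]; subst.
rewrite /herase /=; congr Node.
elim: Dss IH => [|s q ss' qs' Dsq _ IHss] IH //=.
rewrite (IH s (or_introl erefl) q Dsq); congr cons.
by apply: IHss => u hu; apply: IH; right.
Qed.

Lemma Delta_herase_state r :
  wf ar t -> is_state t r -> Delta ar t (herase r) r.
Proof.
move=> wf_t; elim/tree_nested_ind: r => f' qs IH r_state.
have qs_states q : List.In q qs -> is_state t q.
  exact: In_subtrees_child r_state.
apply: (@DeltaNode _ _ _ f'.1 (map (@herase S) qs) qs).
  elim: qs IH qs_states {r_state} => [|q qs IHqs] IH qs_states /=.
    by constructor.
  constructor; first by apply: IH; [left | apply: qs_states; left].
  by apply: IHqs => [u hu | u hu]; [apply: IH; right | apply: qs_states; right].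
exists f'; split => //; split => //.
- exact: In_labels_subtree r_state.
- by have /= /andP [/eqP -> _] := wf_subtree r_state (wf_sharp wf_t).
Qed.

End SubtreeAutomatonRuns.

Theorem corollary3 (S : finType) (ar : S -> nat) (t : tree S) (Ht : wf ar t)
  (r : tree (S * nat)) (Hr : is_state t r) :
  forall s : tree S, down_lang ar t r s <-> s = herase r.
Proof.
move=> s; split; first by case=> _; apply: Delta_herase.
move=> ->; split; last exact: Delta_herase_state.
by rewrite -wf_tmap_fst; apply: wf_subtree Hr (wf_sharp Ht).
Qed.
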